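(* Let $p\ge 3$. Then every $p$-uniform hypertree is $\mathbb{Z}_2\times\mathbb{Z}_2$-cordial.
   Context: A hypergraph $H=(V,E)$ has edges that are non-empty subsets of $V$; it is $p$-uniform if every edge has exactly $p$ vertices. A walk is a sequence $v_0,e_1,v_1,\dots,e_n,v_n$ with $v_i\in V$, $e_i\in E$ and $v_{i-1},v_i\in e_i$; a path is a walk with all $v_i$ distinct and all $e_i$ distinct; a cycle is a walk with at least two edges, all $e_i$ distinct, and all $v_i$ distinct except $v_0=v_n$. A hypergraph is connected if any two vertices are joined by a path. A hypertree is a finite connected hypergraph with no cycles and at least one edge. Let $A=\mathbb{Z}_2\times\mathbb{Z}_2$. For a labeling $c:V\to A$, write $v_c(a)=|c^{-1}(a)|$; $c$ is $A$-friendly if $|v_c(a)-v_c(b)|\le 1$ for all $a,b\in A$. It induces $c^*:E\to A$, $c^*(e)=\sum_{v\in e}c(v)$; write $e_{c^*}(a)=|(c^* )^{-1}(a)|$. $H$ is $A$-cordial if it admits an $A$-friendly labeling $c$ with $|e_{c^*}(a)-e_{c^*}(b)|\le 1$ for all $a,b\in A$. *)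

From HB Require Import structures.
From mathcomp Require Import all_boot all_order all_algebra.
Set Implicit Arguments. Unset Strict Implicit. Unset Printing Implicit Defensive.
Import GRing.Theory.

Definition is_hypergraph (V : finType) (E : {set {set V}}) : Prop :=
  forall e, e \in E -> e != set0.

Definition uniform (V : finType) (E : {set {set V}}) (p : nat) : Prop :=
  forall e, e \in E -> #|e| = p.

(* A walk v0, e1, v1, ..., en, vn is encoded by v0 and s = [:: (e1,v1); ...; (en,vn)]. *)
Fixpoint walk_from (V : finType) (E : {set {set V}}) (x : V) (s : seq ({set V} * V)) : bool :=
  if s is (e, y) :: s' then [&& e \in E, x \in e, y \in e & walk_from E y s'] else true.

Definition is_walk (V : finType) (E : {set {set V}}) (v0 : V) (s : seq ({set V} * V)) : bool :=
  walk_from E v0 s.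

Definition is_path (V : finType) (E : {set {set V}}) (v0 : V) (s : seq ({set V} * V)) : bool :=
  [&& is_walk E v0 s, uniq (v0 :: map snd s) & uniq (map fst s)].

Definition is_cycle (V : finType) (E : {set {set V}}) (v0 : V) (s : seq ({set V} * V)) : bool :=
  [&& is_walk E v0 s, 2 <= size s, uniq (map fst s),
      uniq (belast v0 (map snd s)) & last v0 (map snd s) == v0].

Definition hconnected (V : finType) (E : {set {set V}}) : Prop :=
  forall x y : V, exists s, is_path E x s /\ last x (map snd s) = y.

Definition hypertree (V : finType) (E : {set {set V}}) : Prop :=
  [/\ is_hypergraph E, hconnected E,
      (forall v0 s, ~ is_cycle E v0 s) & E != set0].

Definition A := ('Z_2 * 'Z_2)%type.

Definition vcount (V : finType) (c : V -> A) (a : A) : nat := #|[set v | c v == a]|.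

Definition cstar (V : finType) (c : V -> A) (e : {set V}) : A := (\sum_(v in e) c v)%R.

Definition ecount (V : finType) (E : {set {set V}}) (c : V -> A) (a : A) : nat :=
  #|[set e in E | cstar c e == a]|.

(* |x - y| <= 1 for naturals, written as x <= y + 1 (for all ordered pairs) *)
Definition friendly (V : finType) (c : V -> A) : Prop :=
  forall a b : A, vcount c a <= vcount c b + 1.

Definition cordial (V : finType) (E : {set {set V}}) : Prop :=
  exists c : V -> A, friendly c /\ forall a b : A, ecount E c a <= ecount E c b + 1.

(* Order the edges e_0, e_1, ... of the hypertree so that each meets the vertices already
   covered (a root r and the earlier edges) in exactly one vertex, its anchor; every edge then
   brings q = p - 1 fresh vertices.  Label greedily so that after k edges each element of
   A = Z_2 x Z_2 labels bV or bV + 1 of the covered vertices and bE or bE + 1 of the first k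
   edges, the labels occurring once more forming excess sets SV and SE.  If the fresh vertices
   of e_k are labelled so that the new vertex excess is S', every label gains the same number
   d of vertices up to the two excess sets; since A has characteristic 2 and its elements sum
   to 0, the label of e_k is then c(anchor) + sum SV + sum S'.  The freedom in S' (whose size
   is fixed mod 4) lets this label avoid SE, except when q = 1 (mod 4): then one edge in four
   has a forced label, and the two preceding steps are spent keeping it outside SE. *)

From HB Require Import structures.
From mathcomp Require Import all_boot all_order all_algebra.
From mathcomp Require Import zify ring.
Set Implicit Arguments. Unset Strict Implicit. Unset Printing Implicit Defensive.
Import GRing.Theory.
Local Open Scope ring_scope.

Lemma sum_seq_count (T : finType) (M : nmodType) (F : T -> M) (L : seq T) :
  \sum_(x <- L) F x = \sum_(a : T) F a *+ count_mem a L.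
Proof.
elim: L => [|x L IH]; first by rewrite big_nil big1.
rewrite big_cons IH [RHS](bigD1 x) //= [X in _ = _ + X](eq_bigr (fun a => F a *+ count_mem a L)).
  by rewrite [in LHS](bigD1 x) //= eqxx add1n mulrS addrA.
by move=> a /negbTE; rewrite eq_sym => ->.
Qed.

Lemma size_sum_count (T : finType) (L : seq T) :
  size L = (\sum_(a : T) count_mem a L)%N.
Proof.
by rewrite -sum1_size sum_seq_count; apply: eq_bigr => a _; rewrite natn.
Qed.

Lemma sum_by_counts (V T : finType) (M : nmodType) (F : T -> M) (f : V -> T) (B : {set V}) :
  \sum_(v in B) F (f v) = \sum_(a : T) F a *+ #|[set v in B | f v == a]|.
Proof.
rewrite -big_enum -(big_map f xpredT F) sum_seq_count; apply: eq_bigr => a _.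
rewrite count_map -size_filter -(card_uniqP (filter_uniq _ (enum_uniq _))).
by congr (_ *+ _); apply: eq_card => v; rewrite !inE mem_filter mem_enum andbC.
Qed.

Lemma exists_notin (T : finType) (l : seq T) : (size l < #|T|)%N -> exists x, x \notin l.
Proof.
move=> lt_l; apply/existsP; rewrite -negb_forall; apply: contraTN lt_l => /forallP l_all.
rewrite -leqNgt; apply: leq_trans (card_size l); apply: subset_leq_card.
by apply/subsetP => x _; exact: l_all.
Qed.

Lemma A_cases (x : A) : [\/ x = 0, x = (1, 0), x = (0, 1) | x = (1, 1)].
Proof.
case: x => [[[|[|//]] p1] [[|[|//]] p2]].
- by constructor 1; congr pair; apply/val_inj.
- by constructor 3; congr pair; apply/val_inj.
- by constructor 2; congr pair; apply/val_inj.
- by constructor 4; congr pair; apply/val_inj.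
Qed.

Lemma card_A : #|{: A}| = 4%N.
Proof. by rewrite card_prod card_ord. Qed.

Lemma addAA (x : A) : x + x = 0.
Proof. by apply/eqP; case: (A_cases x) => ->. Qed.

Lemma sum_A : \sum_(a : A) a = 0.
Proof.
have uniq_A : uniq [:: (0 : A); (1, 0); (0, 1); (1, 1)] by [].
rewrite (eq_bigl (mem [:: (0 : A); (1, 0); (0, 1); (1, 1)])); last first.
  by move=> x; case: (A_cases x) => ->.
by rewrite -big_uniq // !big_cons big_nil; apply/eqP.
Qed.

Lemma addA_eq (x y z : A) : (x + y == z) = (y == x + z).
Proof. by rewrite -(inj_eq (addrI x)) addrA addAA add0r. Qed.

Definition setsum (S : {set A}) : A := \sum_(a in S) a.

Lemma setsum0 : setsum set0 = 0.
Proof. by rewrite /setsum big_set0. Qed.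

Lemma setsum1 w : setsum [set w] = w.
Proof. by rewrite /setsum big_set1. Qed.

Lemma setsum2 u w : u != w -> setsum [set u; w] = u + w.
Proof. by move=> neq_uw; rewrite /setsum big_setU1 ?big_set1 // in_set1. Qed.

Lemma setsumC1 w : setsum (~: [set w]) = w.
Proof.
apply: (addrI w); rewrite addAA -sum_A (bigD1 w) //=; congr (_ + _).
by apply: eq_bigl => a; rewrite in_setC in_set1.
Qed.

Lemma cardsC1_A (w : A) : #|~: [set w]| = 3%N.
Proof. by rewrite cardsCs setCK cards1 card_A. Qed.

Lemma count_flatten_nseq (T : finType) (k : T -> nat) (x : T) :
  count_mem x (flatten [seq nseq (k a) a | a <- enum {: T}]) = k x.
Proof.
rewrite count_flatten -map_comp sumnE big_map big_enum /= (bigD1 x) //= count_nseq /= eqxx.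
by rewrite mul1n big1 ?addn0 // => a /negbTE; rewrite count_nseq /= eq_sym => ->.
Qed.

Lemma relabel (V : finType) (B : {set V}) (c : V -> A) (m : A -> nat) (l0 : seq V) (g : V -> A) :
  (\sum_(a : A) m a)%N = #|B| -> uniq l0 -> {subset l0 <= B} ->
  (forall a, count_mem a (map g l0) <= m a)%N ->
  exists f : V -> A, [/\ forall v, v \notin B -> f v = c v, {in l0, f =1 g} &
    forall a, #|[set v in B | f v == a]| = m a].
Proof.
move=> sum_m uniq_l0 sub_l0 le_m.
set L := map g l0 ++ flatten [seq nseq (m a - count_mem a (map g l0)) a | a <- enum {: A}].
have count_L a : count_mem a L = m a by rewrite count_cat count_flatten_nseq subnKC.
set l := l0 ++ [seq v <- enum B | v \notin l0].
have uniq_l : uniq l.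
  rewrite cat_uniq uniq_l0 filter_uniq ?enum_uniq // andbT.
  by apply/hasPn => v; rewrite mem_filter => /andP [].
have mem_l : l =i B.
  move=> v; rewrite mem_cat mem_filter mem_enum.
  by case: (boolP (v \in l0)) => [/sub_l0 -> //| _].
have size_L : size L = #|B|.
  by rewrite size_sum_count (eq_bigr _ (fun a _ => count_L a)).
have size_l : size l = size L.
  rewrite size_L cardE; apply: perm_size; apply: uniq_perm; rewrite ?enum_uniq //.
  by move=> v; rewrite mem_l mem_enum.
set f := fun v => if v \in B then nth 0 L (index v l) else c v.
have map_f : map f l = L.
  apply: (@eq_from_nth _ 0); first by rewrite size_map size_l.
  move=> i; rewrite size_map => lt_i.
  have [v0 _] : {v0 : V | true} by case: (l) lt_i => [|v0 _] // _; exists v0.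
  by rewrite (nth_map v0) // /f -mem_l mem_nth // index_uniq.
exists f; split.
- by move=> v /negbTE; rewrite /f => ->.
- move=> v l0v; rewrite /f -mem_l mem_cat l0v /= index_cat l0v.
  by rewrite nth_cat size_map index_mem l0v (nth_map v) ?index_mem // nth_index.
- move=> a; rewrite -count_L -map_f count_map -size_filter.
  rewrite -(card_uniqP (filter_uniq _ uniq_l)).
  by apply: eq_card => v; rewrite !inE mem_filter mem_l andbC.
Qed.

Lemma sum_mem (T : finType) (S : {set T}) : (\sum_(a : T) (a \in S) = #|S|)%N.
Proof. by rewrite -sum1_card [RHS]big_mkcond; apply: eq_bigr => a _; case: (a \in S). Qed.

Lemma sum_mulrn_mem (S : {set A}) : \sum_(a : A) a *+ (a \in S) = setsum S.
Proof. by rewrite /setsum [RHS]big_mkcond; apply: eq_bigr => a _; case: (a \in S). Qed.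

(* The number of fresh vertices labelled a when the vertex excess passes from S to S'
   and every label gains d vertices. *)
Definition block_count (d : nat) (S S' : {set A}) (a : A) : nat :=
  (d + (a \in S') - (a \in S))%N.

Section BlockCount.
Variables (d : nat) (S S' : {set A}).
Hypothesis d_ok : (S \subset S') || (0 < d)%N.

Lemma block_countE a : (block_count d S S' a + (a \in S) = d + (a \in S'))%N.
Proof.
have : (a \in S) ==> (a \in S') || (0 < d)%N.
  by case/orP: d_ok => [/subsetP sub | ->]; apply/implyP => aS; rewrite ?sub ?orbT.
by rewrite /block_count; case: (a \in S); case: (a \in S') => /=; lia.
Qed.

Lemma sum_block_count q : (4 * d + #|S'| = q + #|S|)%N ->
  (\sum_(a : A) block_count d S S' a = q)%N.
Proof.
move=> card_eq; apply/eqP; rewrite -(eqn_add2r #|S|) -sum_mem -big_split /=.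
rewrite (eq_bigr _ (fun a _ => block_countE a)) big_split /= sum_mem sum_nat_const card_A.
by rewrite card_eq sum_mem.
Qed.

Lemma setsum_block_count :
  \sum_(a : A) a *+ block_count d S S' a = setsum S + setsum S'.
Proof.
apply: (addIr (setsum S)); rewrite [RHS]addrAC addAA add0r -!sum_mulrn_mem -big_split /=.
rewrite (eq_bigr (fun a => a *+ d + a *+ (a \in S'))); last first.
  by move=> a _; rewrite -!mulrnDr block_countE.
by rewrite big_split /= sumrMnl sum_A mul0rn add0r.
Qed.

End BlockCount.

Lemma set_with_sum (r : nat) (x : A) :
  (r <= 3)%N -> (r = 0%N -> x = 0) -> (r = 2%N -> x != 0) ->
  exists S : {set A}, [/\ #|S| = r, setsum S = x & (r = 3%N -> S = ~: [set x])].
Proof.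
case: r => [|[|[|[|//]]]] _ x0 x_neq0.
- by exists set0; rewrite cards0 setsum0 x0.
- by exists [set x]; rewrite cards1 setsum1.
- have neq_0x : (0 : A) != x by rewrite eq_sym x_neq0.
  by exists [set (0 : A); x]; rewrite cards2 neq_0x setsum2 // add0r.
- by exists (~: [set x]); rewrite cardsC1_A setsumC1.
Qed.

(* x is the sum of the next vertex excess set S' (of size n %% 4) and K + x labels the new edge;
   when n = 3 no label may lose a vertex, and x \notin SV gives SV \subset S' = ~: [set x]. *)
Lemma excess_value q (SV SE : {set A}) (K : A) : let n := (#|SV| + q)%N in
  (2 <= q)%N -> (#|SE| <= 3)%N -> (n %% 4 = 2 -> #|SE| <= 2)%N -> (n = 3 -> #|SE| <= 2)%N ->
  (n %% 4 = 0 -> K \notin SE)%N ->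
  exists x : A, [/\ (n %% 4 = 0)%N -> x = 0, (n %% 4 = 2)%N -> x != 0,
                    K + x \notin SE & n = 3%N -> x \notin SV].
Proof.
move=> n q_ge2 SE_le3 SE_le2 SE_le2' K_notin.
have [n0 | n_ne0] := eqVneq (n %% 4)%N 0%N.
  by exists 0; rewrite addr0 n0 K_notin //; split => // n3; move: n0; rewrite n3.
set forbidden := enum SE ++ (if (n %% 4 == 2)%N then [:: K] else [::])
                        ++ (if (n == 3)%N then [seq K + a | a <- enum SV] else [::]).
have [|t t_notin] := @exists_notin _ forbidden.
  have [size_SE size_SV] : size (enum SE) = #|SE| /\ size (enum SV) = #|SV|.
    by rewrite !cardE.
  (* [set] merges two elaborations of #|SE| into one atom for lia. *)
  rewrite card_A !size_cat size_SE; set sE := #|SE| in SE_le3 SE_le2 SE_le2' *.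
  case: eqP => [n2|_]; case: eqP => [n3|_] /=; rewrite ?size_map ?size_SV.
  - by move: n2; rewrite n3.
  - by have := SE_le2 n2; lia.
  - by have := SE_le2' n3; lia.
  - lia.
exists (K + t); rewrite addrA addAA add0r; move: t_notin; rewrite !mem_cat negb_or.
case/andP=> [/[!mem_enum] t_SE /norP [t_K t_SV]]; split => // [n0|n2|n3].
- by rewrite n0 in n_ne0.
- by move: t_K; rewrite n2 inE addA_eq addr0.
- apply: contra t_SV => KtSV; rewrite n3 /=; apply/mapP.
  by exists (K + t); rewrite ?mem_enum // addrA addAA add0r.
Qed.

Lemma choose_excess q (SV SE : {set A}) (K : A) :
  (2 <= q)%N -> (#|SE| <= 3)%N ->
  ((#|SV| + q) %% 4 = 2 -> #|SE| <= 2)%N -> (#|SV| + q = 3 -> #|SE| <= 2)%N ->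
  ((#|SV| + q) %% 4 = 0 -> K \notin SE)%N ->
  exists (S' : {set A}) d, [/\ (4 * d + #|S'| = q + #|SV|)%N, (#|S'| <= 3)%N,
                   (SV \subset S') || (0 < d)%N & K + setsum S' \notin SE].
Proof.
move=> q_ge2 SE_le3 SE_le2 SE_le2' K_notin.
have [x [x0 x_neq0 Kx_SE x_SV]] := excess_value q_ge2 SE_le3 SE_le2 SE_le2' K_notin.
have [|S' [card_S' sum_S' S'3]] := set_with_sum _ x0 x_neq0; first by rewrite -ltnS ltn_pmod.
exists S', ((#|SV| + q) %/ 4)%N; rewrite card_S' sum_S'; split => //; try lia.
rewrite orbC; case: posnP => [d0|//] /=.
have [n2|n3] : (#|SV| + q = 2 \/ #|SV| + q = 3)%N by lia.
  have /cards0_eq -> : #|SV| = 0%N by lia.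
  by rewrite sub0set.
rewrite S'3 ?n3 //; apply/subsetP => a a_SV; rewrite in_setC in_set1.
by apply: contra (x_SV n3) => /eqP <-.
Qed.

Definition excess_add (SE : {set A}) (t : A) : {set A} :=
  if #|SE| == 3%N then set0 else t |: SE.

Lemma excess_addE (SE : {set A}) (b : nat) (t : A) : t \notin SE -> (#|SE| <= 3)%N ->
  [/\ forall a, (b + (a \in SE) + (t == a) = b + (#|SE| == 3%N) + (a \in excess_add SE t))%N,
      (4 * (b + (#|SE| == 3%N)) + #|excess_add SE t| = (4 * b + #|SE|).+1)%N &
      (#|excess_add SE t| <= 3)%N].
Proof.
move=> t_notin SE_le3; rewrite /excess_add.
have card_tSE : #|t |: SE| = #|SE|.+1 by rewrite cardsU1 t_notin.
case: eqP => [SE3|SE_ne3]; last first.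
  split; rewrite ?card_tSE; try lia.
  move=> a; rewrite in_setU1 addn0 -addnA.
  by case: (eqVneq a t) => [->|_]; rewrite ?(negbTE t_notin) ?addn0.
have tSE_full : t |: SE = setT.
  by apply/eqP; rewrite eqEcard subsetT cardsT card_A card_tSE SE3.
split; rewrite ?cards0 //; last by rewrite SE3; lia.
move=> a; have := in_setT a; rewrite -tSE_full in_setU1 in_set0 addn0 -addnA.
by case: (eqVneq a t) => [-> _|_ /= ->]; rewrite ?(negbTE t_notin).
Qed.

Lemma residues k q bV sV bE sE : (2 <= q)%N ->
  (4 * bV + sV = 1 + k * q)%N -> (4 * bE + sE = k)%N -> (sV <= 3)%N -> (sE <= 3)%N ->
  [/\ ((sV + q) %% 4 = 2 -> sE <= 2)%N, (sV + q = 3 -> sE <= 2)%N,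
      ((sV + q) %% 4 = 0 -> sE = 0 \/ (q %% 4 = 1 /\ k %% 4 = 2))%N &
      (q %% 4 = 1 -> (k %% 4 = 0 -> sV = 1 /\ sE = 0) /\ (k %% 4 = 1 -> sV = 2 /\ sE = 1))%N].
Proof.
move=> q_ge2 cardV cardE sV_le3 sE_le3; subst k.
rewrite mulnDl -mulnA in cardV; move: cardV; set X := (bE * q)%N => cardV.
by case: sE sE_le3 cardV => [|[|[|[|//]]]] _ cardV; rewrite ?mul0n ?mul1n in cardV; split; lia.
Qed.

Section Prescribe.
Variables (V : finType) (B : {set V}) (c : V -> A) (m : A -> nat).

Lemma prescribe_one (v : V) (y : A) : v \in B -> (0 < m y)%N ->
  [/\ uniq [:: v], {subset [:: v] <= B} &
      forall a, (count_mem a (map (fun=> y) [:: v]) <= m a)%N].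
Proof.
move=> vB m_y; split=> // [u|a]; first by rewrite inE => /eqP ->.
by rewrite /= addn0; case: eqP => [<-|].
Qed.

Lemma prescribe_pair_sum (v1 v2 : V) (z w : A) :
  z != 0 -> (forall a, 0 < m a)%N -> (1 < m w)%N ->
  (v1 \notin B -> v2 \notin B -> c v1 + c v2 != z) ->
  exists (l0 : seq V) (g : V -> A),
    [/\ uniq l0, {subset l0 <= B}, (forall a, count_mem a (map g l0) <= m a)%N &
        forall c', (forall v, v \notin B -> c' v = c v) -> {in l0, c' =1 g} ->
                   c' v1 + c' v2 != z].
Proof.
move=> z_neq0 m_gt0 m_w old_v12.
have zN (x : A) : x + x != z by rewrite addAA eq_sym.
case: (boolP (v1 \in B)) => B1; case: (boolP (v2 \in B)) => B2.
- have [<-|neq12] := eqVneq v1 v2; first by exists [::], c; split.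
  exists [:: v1; v2], (fun=> w); split=> [|u|a|c' _ c'_g].
  + by rewrite /= inE neq12.
  + by rewrite !inE => /orP [] /eqP ->.
  + by rewrite /= addn0; case: eqP => [<-|]; rewrite ?m_w.
  + by rewrite !c'_g ?mem_head ?inE ?eqxx ?orbT.
- have [|y y_notin] := @exists_notin A [:: c v2 + z]; first by rewrite card_A.
  have [uniq1 sub1 count1] := prescribe_one B1 (m_gt0 y).
  exists [:: v1], (fun=> y); split=> // c' c'_out c'_g.
  by rewrite (c'_g v1) ?mem_head // (c'_out v2) // addrC addA_eq -mem_seq1.
- have [|y y_notin] := @exists_notin A [:: c v1 + z]; first by rewrite card_A.
  have [uniq1 sub1 count1] := prescribe_one B2 (m_gt0 y).
  exists [:: v2], (fun=> y); split=> // c' c'_out c'_g.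
  by rewrite (c'_g v2) ?mem_head // (c'_out v1) // addA_eq -mem_seq1.
- by exists [::], c; split=> // c' c'_out _; rewrite !c'_out //; exact: old_v12.
Qed.

End Prescribe.

Section Attached.
Variables (V : finType) (r : V).

Fact covered_key : unit. Proof. exact: tt. Qed.
Definition covered : seq {set V} -> {set V} :=
  locked_with covered_key (fun t => r |: [set v | has (fun e : {set V} => v \in e) t]).

Lemma coveredE t : covered t = r |: [set v | has (fun e : {set V} => v \in e) t].
Proof. by rewrite /covered unlock. Qed.

Definition attached (t : seq {set V}) : Prop :=
  forall k, (k < size t)%N -> #|nth set0 t k :&: covered (take k t)| = 1%N.

Lemma covered_nil : covered [::] = [set r].
Proof. by apply/setP => v; rewrite coveredE !inE orbF. Qed.

Lemma covered_rcons t e : covered (rcons t e) = covered t :|: e.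
Proof. by apply/setP => v; rewrite !coveredE !inE has_rcons orbA orbAC. Qed.

Lemma root_covered t : r \in covered t.
Proof. by rewrite coveredE setU11. Qed.

Lemma mem_covered (t : seq {set V}) e v : e \in t -> v \in e -> v \in covered t.
Proof. by move=> te ev; rewrite coveredE !inE; apply/orP; right; apply/hasP; exists e. Qed.

Lemma attached_rcons t e :
  attached (rcons t e) <-> attached t /\ #|e :&: covered t| = 1%N.
Proof.
have take_rcons k : (k <= size t)%N -> take k (rcons t e) = take k t.
  by move=> le_k; rewrite -cats1 takel_cat.
split=> [att | [att e1] k].
  split=> [k lt_k|].
    by have := att k; rewrite size_rcons ltnS nth_rcons lt_k take_rcons ?(ltnW lt_k) //; apply.
  by have := att (size t); rewrite size_rcons nth_rcons ltnn eqxx take_rcons // take_size; apply.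
rewrite size_rcons ltnS leq_eqVlt => /orP [/eqP ->|lt_k].
  by rewrite nth_rcons ltnn eqxx take_rcons // take_size.
by rewrite nth_rcons lt_k take_rcons ?(ltnW lt_k) //; apply: att.
Qed.

End Attached.

Section Labelling.
Variables (V : finType) (r : V) (s : seq {set V}) (q : nat).
Hypothesis q_ge2 : (2 <= q)%N.
Hypothesis s_attached : attached r s.
Hypothesis s_card : forall e, e \in s -> #|e| = q.+1.

Local Notation visited k := (covered r (take k s)).
Local Notation edge k := (nth set0 s k).

Definition anchor k : V := odflt r [pick v in edge k :&: visited k].
Definition fresh k : {set V} := edge k :\: visited k.

Section Anchor.
Variable k : nat.
Hypothesis lt_k : (k < size s)%N.

Lemma anchorP : edge k :&: visited k = [set anchor k].
Proof.
have /cards1P [x Ex] : #|edge k :&: visited k| == 1%N by rewrite s_attached.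
by rewrite /anchor; case: pickP => [v|/(_ x)]; rewrite Ex inE ?eqxx // => /eqP ->.
Qed.

Lemma anchor_visited : anchor k \in visited k.
Proof. by have := set11 (anchor k); rewrite -anchorP inE => /andP []. Qed.

Lemma visitedS : visited k.+1 = visited k :|: fresh k.
Proof.
by rewrite (take_nth set0 lt_k) covered_rcons /fresh setDE setUIr setUCr setIT.
Qed.

Lemma card_fresh : #|fresh k| = q.
Proof. by rewrite cardsD s_attached // s_card ?mem_nth // subn1. Qed.

Lemma edgeE : edge k = anchor k |: fresh k.
Proof. by rewrite /fresh -anchorP setID. Qed.

Lemma cstar_edge (c : V -> A) : cstar c (edge k) = c (anchor k) + \sum_(v in fresh k) c v.
Proof. by rewrite /cstar edgeE big_setU1 // inE anchor_visited. Qed.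

End Anchor.

Lemma fresh_visited k v : v \in fresh k -> v \notin visited k.
Proof. by rewrite inE => /andP []. Qed.

Definition vcount_upto (c : V -> A) k (a : A) : nat := #|[set v in visited k | c v == a]|.
Definition ecount_upto (c : V -> A) k (a : A) : nat := count (fun e => cstar c e == a) (take k s).

Lemma vcount_uptoS c c' k a : (k < size s)%N -> {in visited k, c' =1 c} ->
  vcount_upto c' k.+1 a = (vcount_upto c k a + #|[set v in fresh k | c' v == a]|)%N.
Proof.
move=> lt_k c'E; rewrite /vcount_upto visitedS //.
have -> : [set v in visited k :|: fresh k | c' v == a] =
          [set v in visited k | c v == a] :|: [set v in fresh k | c' v == a].
  apply/setP => v; rewrite !inE andb_orl.
  by case: (boolP (v \in visited k)) => //= /c'E ->.
rewrite cardsU -[RHS]subn0; congr (_ - _)%N; apply/eqP; rewrite cards_eq0; apply/eqP/setP => v.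
by rewrite !inE; case: (v \in visited k); rewrite /= ?andbF.
Qed.

Lemma ecount_uptoS c c' k a : (k < size s)%N -> {in visited k, c' =1 c} ->
  ecount_upto c' k.+1 a = (ecount_upto c k a + (cstar c' (edge k) == a))%N.
Proof.
move=> lt_k c'E; rewrite /ecount_upto (take_nth set0 lt_k) -cats1 count_cat /= addn0.
congr (_ + _)%N; apply: eq_in_count => e e_in /=; congr (_ == _).
by apply: eq_bigr => v ev; apply: c'E; exact: mem_covered e_in ev.
Qed.

Definition balanced k c bV (SV : {set A}) bE (SE : {set A}) : Prop :=
  [/\ forall a, vcount_upto c k a = (bV + (a \in SV))%N,
      forall a, ecount_upto c k a = (bE + (a \in SE))%N,
      (4 * bV + #|SV| = 1 + k * q)%N, (4 * bE + #|SE| = k)%N &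
      (#|SV| <= 3)%N /\ (#|SE| <= 3)%N].

Lemma balanced0 : balanced 0 (fun=> 0) 0 [set 0 : A] 0 set0.
Proof.
split; rewrite ?cards1 ?cards0 // => a;
  rewrite /vcount_upto /ecount_upto take0 ?covered_nil ?inE //.
rewrite [a == 0]eq_sym; case: eqP => _ /=.
  by rewrite (_ : [set v in _ | true] = [set r]) ?cards1 //; apply/setP => v; rewrite !inE andbT.
by rewrite (_ : [set v in _ | false] = set0) ?cards0 //; apply/setP => v; rewrite !inE andbF.
Qed.

Lemma extend_balanced k c bV SV bE SE (S' : {set A}) d (l0 : seq V) (g : V -> A) :
  (k < size s)%N -> balanced k c bV SV bE SE ->
  (4 * d + #|S'| = q + #|SV|)%N -> (#|S'| <= 3)%N -> (SV \subset S') || (0 < d)%N ->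
  c (anchor k) + setsum SV + setsum S' \notin SE ->
  uniq l0 -> {subset l0 <= fresh k} ->
  (forall a, count_mem a (map g l0) <= block_count d SV S' a)%N ->
  exists c', [/\ forall v, v \notin fresh k -> c' v = c v, {in l0, c' =1 g} &
    balanced k.+1 c' (bV + d) S' (bE + (#|SE| == 3%N))
      (excess_add SE (c (anchor k) + setsum SV + setsum S'))].
Proof.
move=> lt_k [vcE ecE cardV cardE [SV_le3 SE_le3]] card_S' S'_le3 d_ok t_notin uniq_l0 l0_fresh le_g.
have sum_m : (\sum_(a : A) block_count d SV S' a)%N = #|fresh k|.
  by rewrite card_fresh // (sum_block_count d_ok card_S').
have [c' [c'_out c'_l0 c'_count]] := relabel c sum_m uniq_l0 l0_fresh le_g.
exists c'; split => //.
have c'_visited : {in visited k, c' =1 c}.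
  by move=> v vk; apply: c'_out; apply: contraL vk => /fresh_visited.
have cstar_c' : cstar c' (edge k) = c (anchor k) + setsum SV + setsum S'.
  rewrite cstar_edge // (sum_by_counts (fun a : A => a)).
  rewrite (eq_bigr _ (fun a _ => congr1 _ (c'_count a))).
  by rewrite setsum_block_count // c'_visited ?anchor_visited // addrA.
have [ecE' cardE' SE'_le3] := excess_addE bE t_notin SE_le3.
split => //.
- move=> a; rewrite (vcount_uptoS _ lt_k c'_visited) vcE c'_count.
  by rewrite -addnA [((_ \in SV) + _)%N]addnC block_countE // addnA.
- by move=> a; rewrite (ecount_uptoS _ lt_k c'_visited) ecE cstar_c' ecE'.
- by rewrite mulSn; lia.
- by rewrite cardE' cardE.
Qed.

Lemma extend_balanced0 k c bV SV bE SE (S' : {set A}) d :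
  (k < size s)%N -> balanced k c bV SV bE SE ->
  (4 * d + #|S'| = q + #|SV|)%N -> (#|S'| <= 3)%N -> (SV \subset S') || (0 < d)%N ->
  c (anchor k) + setsum SV + setsum S' \notin SE ->
  exists c', balanced k.+1 c' (bV + d) S' (bE + (#|SE| == 3%N))
               (excess_add SE (c (anchor k) + setsum SV + setsum S')).
Proof.
move=> lt_k bal card_S' S'_le3 d_ok t_notin.
have [//|//|//|c' [_ _ bal']] :=
  extend_balanced (l0 := [::]) (g := c) lt_k bal card_S' S'_le3 d_ok t_notin.
by exists c'.
Qed.

(* For q = 1 (mod 4), the edge e_k with k = 2 (mod 4) adds no excess, so its label is forced;
   these conditions, prepared during the two previous steps, keep it outside SE. *)
Definition lookahead k c (SV SE : {set A}) : Prop :=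
  (q %% 4 = 1)%N ->
  ((k %% 4 = 1)%N -> (k.+1 < size s)%N -> anchor k.+1 \in visited k ->
     c (anchor k) + c (anchor k.+1) != setsum SV) /\
  ((k %% 4 = 2)%N -> (k < size s)%N -> setsum SV + c (anchor k) \notin SE).

Definition good_state k c : Prop :=
  exists bV SV bE SE, balanced k c bV SV bE SE /\ lookahead k c SV SE.

Lemma step_generic k c bV SV bE SE :
  (k < size s)%N -> balanced k c bV SV bE SE -> lookahead k c SV SE ->
  ((q %% 4 = 1)%N -> (2 <= k %% 4)%N) -> exists c', good_state k.+1 c'.
Proof.
move=> lt_k bal look k_ge2; have [_ _ cardV cardE [SV_le3 SE_le3]] := bal.
have [SE_le2 SE_le2' SE0 _] := residues q_ge2 cardV cardE SV_le3 SE_le3.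
have [|S' [d [card_S' S'_le3 d_ok t_notin]]] :=
  @choose_excess q SV SE (c (anchor k) + setsum SV) q_ge2 SE_le3 SE_le2 SE_le2'.
  move=> /SE0 [/cards0_eq -> | [q1 k2]]; first by rewrite inE.
  by rewrite addrC; apply: (look q1).2.
have [c' bal'] := extend_balanced0 lt_k bal card_S' S'_le3 d_ok t_notin.
exists c'; do 4!eexists; split; first exact: bal'.
by move=> q1; have := k_ge2 q1; split=> k1; lia.
Qed.

Lemma step_phase0 k c bV SV bE SE :
  (k < size s)%N -> balanced k c bV SV bE SE ->
  (q %% 4 = 1)%N -> (k %% 4 = 0)%N -> #|SV| = 1%N -> #|SE| = 0%N ->
  exists c', good_state k.+1 c'.
Proof.
move=> lt_k bal q1 k0 SV1 SE0.
have [u SVu] : exists u, SV = [set u] by apply/cards1P; rewrite SV1.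
have [d q_eq] : exists d, (4 * d + 1 = q)%N by exists ((q - 1) %/ 4)%N; lia.
set v1 := anchor k.+1; set v2 := anchor k.+2.
(* The next edge will need c v1 + c v2 != setsum S', where S' = [set u; w]. *)
have [|w] := @exists_notin A [:: u; u + (c v1 + c v2)]; first by rewrite card_A.
rewrite !inE negb_or => /andP [w_u w_X].
set S' := [set u; w].
have card_S' : #|S'| = 2%N by rewrite cards2 eq_sym w_u.
have card_eq : (4 * d + #|S'| = q + #|SV|)%N by rewrite card_S' SV1; lia.
have m_gt0 a : (0 < block_count d SV S' a)%N.
  have : (a \in SV) ==> (a \in S') by rewrite SVu !inE; apply/implyP => ->.
  by rewrite /block_count; case: (a \in SV); case: (a \in S') => //=; lia.
have m_w : (1 < block_count d SV S' w)%N.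
  by rewrite /block_count SVu !inE eqxx orbT (negbTE w_u); lia.
have uw_neq0 : u + w != 0 by rewrite addA_eq addr0.
have [|l0 [g [uniq_l0 l0_fresh le_g c'_sum]]] :=
  @prescribe_pair_sum V (fresh k) c _ v1 v2 (u + w) w uw_neq0 m_gt0 m_w.
  by move=> _ _; rewrite -addA_eq eq_sym.
have [|||c' [c'_out c'_g bal']] := extend_balanced lt_k bal card_eq _ _ _ uniq_l0 l0_fresh le_g.
- by rewrite card_S'.
- by apply/orP; right; lia.
- by rewrite (cards0_eq SE0) inE.
exists c'; do 4!eexists; split; first exact: bal'.
move=> _; split=> [_ _ _ | k2]; last by lia.
by rewrite setsum2 ?(eq_sym u) //; exact: c'_sum.
Qed.

Lemma step_phase1 k c bV SV bE SE :
  (k < size s)%N -> balanced k c bV SV bE SE -> lookahead k c SV SE ->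
  (q %% 4 = 1)%N -> (k %% 4 = 1)%N -> #|SV| = 2%N -> #|SE| = 1%N ->
  exists c', good_state k.+1 c'.
Proof.
move=> lt_k bal look q1 k1 SV2 SE1.
have [f SEf] : exists f, SE = [set f] by apply/cards1P; rewrite SE1.
have [d q_eq] : exists d, (4 * d + 1 = q)%N by exists ((q - 1) %/ 4)%N; lia.
set K := c (anchor k) + setsum SV; set v1 := anchor k.+1.
(* The next edge gets the forced label w + c' v1, which must avoid the new SE = [set K + w; f]. *)
have [|w] := @exists_notin A [:: K + f; c v1 + f]; first by rewrite card_A.
rewrite !inE negb_or => /andP [w_Kf w_v1f].
have [|y] := @exists_notin A [:: w; w + f; K]; first by rewrite card_A.
rewrite !inE !negb_or => /and3P [y_w y_wf y_K].
have card_eq : (4 * d + #|~: [set w]| = q + #|SV|)%N by rewrite cardsC1_A SV2; lia.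
have t_notin : K + setsum (~: [set w]) \notin SE.
  by rewrite setsumC1 SEf in_set1 addA_eq.
set l0 := if v1 \in fresh k then [:: v1] else [::].
have [|||||c' [c'_out c'_g bal']] :=
  extend_balanced (l0 := l0) (g := fun=> y) lt_k bal card_eq _ _ t_notin.
- by rewrite cardsC1_A.
- by apply/orP; right; lia.
- by rewrite /l0; case: ifP.
- by rewrite /l0; case: ifP => // v1_fresh v; rewrite inE => /eqP ->.
- move=> a; rewrite /l0 /block_count; case: ifP => //= _; rewrite addn0 !inE.
  by case: eqP => [<-|] //; rewrite y_w; lia.
exists c'; do 4!eexists; split; first exact: bal'.
move=> _; split=> [k1'|_ lt_k1]; first by lia.
have [c'v1_K c'v1_wf] : c' v1 != K /\ c' v1 != w + f.
  have [v1_fresh|v1_old] := boolP (v1 \in fresh k).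
    by rewrite c'_g /l0 ?v1_fresh ?mem_head.
  have v1_vis : v1 \in visited k.
    by move: (anchor_visited lt_k1); rewrite visitedS // in_setU (negbTE v1_old) orbF.
  rewrite c'_out //; split; last by rewrite -addA_eq addrC addA_eq.
  by rewrite /K -addA_eq; exact: (look q1).1 k1 lt_k1 v1_vis.
rewrite setsumC1 /excess_add SE1 /= SEf !inE negb_or [_ + w]addrC (inj_eq (addrI w)).
by rewrite addA_eq c'v1_K c'v1_wf.
Qed.

Lemma good_stateS k c : (k < size s)%N -> good_state k c -> exists c', good_state k.+1 c'.
Proof.
move=> lt_k [bV [SV [bE [SE [bal look]]]]]; have [_ _ cardV cardE [SV_le3 SE_le3]] := bal.
have [_ _ _ small] := residues q_ge2 cardV cardE SV_le3 SE_le3.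
have [q1|q_ne1] := eqVneq (q %% 4)%N 1%N; last first.
  by apply: (step_generic lt_k bal look) => q1; rewrite q1 in q_ne1.
have [k_lt2|k_ge2] := ltnP (k %% 4) 2; last exact: (step_generic lt_k bal look).
have [k0|k1] : (k %% 4 = 0 \/ k %% 4 = 1)%N by lia.
- by have [SV1 SE0] := (small q1).1 k0; apply: (step_phase0 lt_k bal).
- by have [SV2 SE1] := (small q1).2 k1; apply: (step_phase1 lt_k bal look).
Qed.

Lemma exists_good_state k : (k <= size s)%N -> exists c, good_state k c.
Proof.
elim: k => [_|k IHk lt_k].
  exists (fun=> 0), 0%N, [set 0 : A], 0%N, set0; split; first exact: balanced0.
  by move=> _; split=> k_mod; rewrite mod0n in k_mod.
by have [c good_c] := IHk (ltnW lt_k); exact: good_stateS good_c.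
Qed.

Lemma balanced_labelling : exists c : V -> A,
  (forall a b, vcount_upto c (size s) a <= vcount_upto c (size s) b + 1)%N /\
  (forall a b, ecount_upto c (size s) a <= ecount_upto c (size s) b + 1)%N.
Proof.
have [c [bV [SV [bE [SE [[vcE ecE _ _ _] _]]]]]] := exists_good_state (leqnn _).
by exists c; split=> a b; rewrite ?vcE ?ecE; case: (_ \in _); case: (_ \in _); lia.
Qed.

End Labelling.

Section AttachedOrder.
Variables (V : finType) (E : {set {set V}}) (r : V).

Lemma walk_cat x s1 s2 :
  walk_from E x (s1 ++ s2) = walk_from E x s1 && walk_from E (last x (map snd s1)) s2.
Proof. by elim: s1 x => [|[e y] s1 IH] x //=; rewrite IH !andbA. Qed.

Lemma walk_edges x sp : walk_from E x sp -> all (fun p => p.1 \in E) sp.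
Proof. by elim: sp x => [|[e y] sp IH] x //= /and4P [-> _ _ /IH]. Qed.

Lemma walk_covered t x sp : x \in covered r t -> walk_from E x sp ->
  all (fun p => p.1 \in t) sp -> {subset x :: map snd sp <= covered r t}.
Proof.
elim: sp x => [|[e y] sp IH] x x_t /=; first by move=> _ _ v; rewrite inE => /eqP ->.
case/and4P=> _ _ ye walk /andP [et all_t] v; rewrite inE => /orP [/eqP -> //|].
exact: IH (mem_covered r et ye) walk all_t v.
Qed.

Lemma is_path_rcons x sp e y :
  is_path E x sp -> e \in E -> last x (map snd sp) \in e -> y \in e ->
  y \notin x :: map snd sp -> e \notin map fst sp -> is_path E x (rcons sp (e, y)).
Proof.
rewrite /is_path /is_walk => /and3P [walk uniq_v uniq_e] eE le ye y_new e_new.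
rewrite -cats1 walk_cat walk /= eE le ye cats1 !map_rcons !rcons_uniq mem_rcons in_cons.
move: uniq_v y_new => /= /andP [x_sp uniq_sp]; rewrite inE negb_or => /andP [y_x y_sp].
by rewrite negb_or eq_sym y_x x_sp y_sp uniq_sp e_new uniq_e.
Qed.

Lemma is_path_cons x e z sp :
  is_path E z sp -> e \in E -> x \in e -> z \in e ->
  x \notin z :: map snd sp -> e \notin map fst sp -> is_path E x ((e, z) :: sp).
Proof.
rewrite /is_path /is_walk => /and3P [walk uniq_v uniq_e] eE xe ze x_new e_new.
by move: uniq_v; rewrite /= eE xe ze walk x_new e_new uniq_e => ->.
Qed.

Definition path_within (t : seq {set V}) x y sp : Prop :=
  [/\ is_path E x sp, last x (map snd sp) = y & all (fun p => p.1 \in t) sp].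

Lemma covered_path t : uniq t -> {subset t <= E} -> attached r t ->
  forall x y, x \in covered r t -> y \in covered r t -> exists sp, path_within t x y sp.
Proof.
elim/last_ind: t => [|t e IH] + sub_te att x y.
  by rewrite covered_nil !inE => _ /eqP -> /eqP ->; exists [::].
rewrite rcons_uniq => /andP [e_new uniq_t].
have sub_t : {subset t <= E} by move=> f tf; apply: sub_te; rewrite mem_rcons inE tf orbT.
have eE : e \in E by apply: sub_te; rewrite mem_rcons mem_head.
have [att_t /eqP/cards1P [z ez]] := (attached_rcons _ _ _).1 att.
have [z_e z_t] : z \in e /\ z \in covered r t by have := set11 z; rewrite -ez inE => /andP.
have {}IH := IH uniq_t sub_t att_t.
have lift sp : all (fun p => p.1 \in t) sp -> all (fun p => p.1 \in rcons t e) sp.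
  by apply: sub_all => f /=; rewrite mem_rcons inE => ->; rewrite orbT.
have e_notin sp x' y' : path_within t x' y' sp -> e \notin map fst sp.
  case=> _ _ /allP all_t; apply/mapP => -[f /all_t /= tf ef].
  by move: e_new; rewrite ef tf.
have covered_sp sp x' y' : x' \in covered r t -> path_within t x' y' sp ->
    {subset x' :: map snd sp <= covered r t}.
  by move=> x't [/and3P [walk _ _] _ all_t]; exact: walk_covered x't walk all_t.
have new_in_e v : v \in covered r (rcons t e) -> v \notin covered r t -> v \in e.
  by rewrite covered_rcons in_setU => /orP [->|].
have [x_t|x_new] := boolP (x \in covered r t);
  have [y_t|y_new] := boolP (y \in covered r t) => /new_in_e xe /new_in_e ye.
- by have [sp [P L all_t]] := IH x y x_t y_t; exists sp; split; rewrite ?lift.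
- have [sp p] := IH x z x_t z_t; have [P L all_t] := p.
  exists (rcons sp (e, y)); split.
  + apply: is_path_rcons P eE _ (ye y_new) _ (e_notin _ _ _ p); first by rewrite L.
    by apply: contra y_new => /(covered_sp _ _ _ x_t p).
  + by rewrite map_rcons last_rcons.
  + by rewrite all_rcons mem_rcons mem_head lift.
- have [sp p] := IH z y z_t y_t; have [P L all_t] := p.
  exists ((e, z) :: sp); split => //=; last by rewrite mem_rcons mem_head lift.
  apply: is_path_cons P eE (xe x_new) z_e _ (e_notin _ _ _ p).
  by apply: contra x_new => /(covered_sp _ _ _ z_t p).
- have [<-|neq_xy] := eqVneq x y; first by exists [::].
  exists [:: (e, y)]; split; rewrite //= ?mem_rcons ?mem_head //.
  by rewrite /is_path /is_walk /= eE xe ?ye // inE neq_xy.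
Qed.

Hypothesis acyclic : forall v0 sp, ~ is_cycle E v0 sp.

Lemma covered_meet_single t e x y : uniq t -> {subset t <= E} -> attached r t ->
  e \in E -> e \notin t -> x \in e -> y \in e -> x \in covered r t -> y \in covered r t -> x = y.
Proof.
move=> uniq_t sub_t att eE e_new xe ye x_t y_t; apply/eqP/negPn/negP => neq_xy.
have [sp [/and3P [walk uniq_v uniq_e] L all_t]] := covered_path uniq_t sub_t att y_t x_t.
suff cyc : is_cycle E y (rcons sp (e, y)) by exact: acyclic cyc.
apply/and5P; split.
- by move: walk; rewrite /is_walk -cats1 walk_cat => ->; rewrite L /= eE xe ye.
- by rewrite size_rcons ltnS lt0n size_eq0; apply: contra neq_xy => /eqP sp0; rewrite -L sp0.
- rewrite map_rcons rcons_uniq uniq_e andbT.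
  by apply: contra e_new => /mapP [f /(allP all_t) tf /= ->].
- by rewrite map_rcons belast_rcons.
- by rewrite map_rcons last_rcons.
Qed.

Lemma walk_exit t x sp :
  x \in covered r t -> walk_from E x sp -> last x (map snd sp) \notin covered r t ->
  exists2 f, f \in E & f \notin t /\ f :&: covered r t != set0.
Proof.
elim: sp x => [|[f y] sp IH] x /= x_t; first by rewrite x_t.
case/and4P=> fE xf yf walk last_y; have [tf|f_new] := boolP (f \in t).
  exact: IH (mem_covered r tf yf) walk last_y.
by exists f => //; split => //; apply/set0Pn; exists x; rewrite inE xf.
Qed.

Hypothesis connected : hconnected E.
Hypothesis edges_nonempty : is_hypergraph E.

Lemma attached_extend t : uniq t -> {subset t <= E} -> attached r t -> (size t < #|E|)%N ->
  exists2 e, e \in E & e \notin t /\ #|e :&: covered r t| = 1%N.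
Proof.
move=> uniq_t sub_t att lt_t.
have [e0 e0E e0_new] : exists2 e0, e0 \in E & e0 \notin t.
  have /subsetPn [e0 e0E e0_new] : ~~ (E \subset t).
    by apply: contraTN lt_t => /subset_leq_card; rewrite (card_uniqP uniq_t) -leqNgt.
  by exists e0.
have [f fE [f_new f_meet]] : exists2 f, f \in E & f \notin t /\ f :&: covered r t != set0.
  have [meet|] := boolP (e0 :&: covered r t != set0); first by exists e0.
  rewrite negbK => meet0; have /set0Pn [v ve0] := edges_nonempty e0E.
  have [sp [/and3P [walk _ _] last_v]] := connected r v.
  apply: walk_exit (root_covered r t) walk _; rewrite last_v.
  by apply: contraTN meet0 => v_t; apply/set0Pn; exists v; rewrite inE ve0.
exists f => //; split => //; case/set0Pn: f_meet => w; rewrite inE => /andP [wf w_t].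
apply/eqP/cards1P; exists w; apply/setP => v; rewrite !inE.
apply/andP/eqP => [[vf v_t]|->]; last by rewrite wf.
exact: covered_meet_single uniq_t sub_t att fE f_new vf wf v_t w_t.
Qed.

Lemma exists_attached_order n : (n <= #|E|)%N ->
  exists t, [/\ attached r t, uniq t, {subset t <= E} & size t = n].
Proof.
elim: n => [_|n IHn lt_n]; first by exists [::]; split => // k.
have [t [att uniq_t sub_t size_t]] := IHn (ltnW lt_n).
have [|e eE [e_new e1]] := attached_extend uniq_t sub_t att; first by rewrite size_t.
exists (rcons t e); split.
- exact/attached_rcons.
- by rewrite rcons_uniq e_new.
- by move=> f; rewrite mem_rcons inE => /orP [/eqP ->|/sub_t].
- by rewrite size_rcons size_t.
Qed.

End AttachedOrder.

Lemma hypertree_attached_order (V : finType) (E : {set {set V}}) : hypertree E ->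
  exists r t, [/\ attached r t, uniq t, t =i E & covered r t = setT].
Proof.
move=> [nonempty connected acyclic /set0Pn [e0 e0E]].
have /set0Pn [r _] := nonempty _ e0E.
have [t [att uniq_t sub_t size_t]] :=
  exists_attached_order r acyclic connected nonempty (leqnn #|E|).
have t_E : t =i E.
  have card_t : #|t| = #|E| by rewrite (card_uniqP uniq_t).
  by apply/(subset_cardP card_t)/subsetP.
exists r, t; split=> //; apply/setP => v; rewrite inE.
have [sp [/and3P [walk _ _] <-]] := connected r v.
have all_t : all (fun p => p.1 \in t) sp.
  by apply/allP => p /(allP (walk_edges walk)); rewrite t_E.
exact: walk_covered (root_covered r t) walk all_t _ (mem_last _ _).
Qed.

Lemma card_set_count (T : finType) (t : seq T) (D : {set T}) (P : pred T) :
  uniq t -> t =i D -> #|[set x in D | P x]| = count P t.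
Proof.
move=> uniq_t t_D; rewrite -size_filter -(card_uniqP (filter_uniq _ uniq_t)).
by apply: eq_card => x; rewrite !inE mem_filter t_D andbC.
Qed.

Local Close Scope ring_scope.

Theorem theorem3 (p : nat) (V : finType) (E : {set {set V}}) :
  3 <= p -> uniform E p -> hypertree E -> cordial E.
Proof.
move=> p_ge3 unif tree.
have [r [t [att uniq_t t_E covered_t]]] := hypertree_attached_order tree.
have card_t e : e \in t -> #|e| = (p.-1).+1.
  by rewrite t_E prednK ?(leq_trans _ p_ge3) //; exact: unif.
have q_ge2 : 2 <= p.-1 by rewrite -ltnS prednK ?(leq_trans _ p_ge3).
have [c [vbal ebal]] := balanced_labelling q_ge2 att card_t.
exists c; split=> a b.
- have vcountE x : vcount c x = vcount_upto r t c (size t) x.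
    by rewrite /vcount /vcount_upto take_size covered_t; apply: eq_card => v; rewrite !inE.
  by rewrite !vcountE vbal.
- have ecountE x : ecount E c x = ecount_upto t c (size t) x.
    by rewrite /ecount /ecount_upto take_size (card_set_count _ uniq_t t_E).
  by rewrite !ecountE ebal.
Qed.
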